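(* Let $n\ge1$, $p$ a prime dividing $n$, and $\prec$ a degree-compatible term order on the monomials of $\mathbb{C}[x_1,\ldots,x_n]$. Then for every $0\le t\le p-1$, $$\{x^u\in D:\ \deg(x^u)<\tfrac{n(p-1)}{p}\}\subseteq\mathrm{Sm}(\prec,B_t).$$
   Context: A term order is degree-compatible if $\deg u<\deg v$ implies $u\prec v$. $\omega_1=e^{2\pi i/p}$, $\omega_j=\omega_1^j$; $B=\{1,\omega_1,\ldots,\omega_{p-1}\}^n$, $B_t=\{(t_1,\ldots,t_n)\in B: t_1\cdots t_n=\omega_t\}$. $D=\{x_1^{u_1}\cdots x_n^{u_n}: 0\le u_i\le p-1\}$. $\mathrm{Sm}(\prec,X)$ is the set of monomials that are not the $\prec$-leading monomial of any nonzero polynomial vanishing on $X$. *)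

From HB Require Import structures.
From mathcomp Require Import all_boot all_order all_algebra all_field.
Set Implicit Arguments. Unset Strict Implicit. Unset Printing Implicit Defensive.
Import Order.TTheory GRing.Theory Num.Theory.
Local Open Scope ring_scope.

(* Monomials x^u in n variables, represented by exponent vectors u. *)
Definition mono (n : nat) := {ffun 'I_n -> nat}.

Definition mdeg n (u : mono n) : nat := (\sum_(i < n) u i)%N.
Definition mone n : mono n := [ffun _ => 0%N].
Definition mmul n (u v : mono n) : mono n := [ffun i => (u i + v i)%N].

(* A term order on monomials: a total order, compatible with multiplication,
   with 1 as least element (hence a well-order). [le u v] means u <= v. *)
Definition term_order n (le : rel (mono n)) : Prop :=
  reflexive le /\ transitive le /\ antisymmetric le /\
  (forall u v, le u v || le v u) /\
  (forall u, le (mone n) u) /\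
  (forall u v w, le u v -> le (mmul u w) (mmul v w)).

Definition mlt n (le : rel (mono n)) (u v : mono n) : bool := le u v && (u != v).

Definition degree_compatible n (le : rel (mono n)) : Prop :=
  forall u v : mono n, (mdeg u < mdeg v)%N -> mlt le u v.

(* A polynomial in C[x_1..x_n]: coefficients on a finite list of monomials. *)
Record mpoly (R : nzRingType) (n : nat) :=
  MPoly { msupp : seq (mono n); mcoef_raw : mono n -> R }.

Definition mcoef (R : nzRingType) n (f : mpoly R n) (u : mono n) : R :=
  if u \in msupp f then mcoef_raw f u else 0.

Definition mmonoeval (R : comNzRingType) n (u : mono n) (x : 'I_n -> R) : R :=
  \prod_(i < n) x i ^+ u i.

Definition meval (R : comNzRingType) n (f : mpoly R n) (x : 'I_n -> R) : R :=
  \sum_(u <- undup (msupp f)) mcoef f u * mmonoeval u x.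

Definition mpoly_nonzero (R : nzRingType) n (f : mpoly R n) : Prop :=
  exists u, mcoef f u != 0.

Definition is_lead_mono (R : nzRingType) n (le : rel (mono n)) (f : mpoly R n)
  (u : mono n) : Prop :=
  mcoef f u != 0 /\ forall v, mcoef f v != 0 -> le v u.

Definition vanishes_on (R : comNzRingType) n (f : mpoly R n)
  (X : ('I_n -> R) -> Prop) : Prop :=
  forall x, X x -> meval f x = 0.

Definition Sm (R : comNzRingType) n (le : rel (mono n)) (X : ('I_n -> R) -> Prop)
  (u : mono n) : Prop :=
  ~ exists f : mpoly R n,
      [/\ vanishes_on f X, mpoly_nonzero f & is_lead_mono le f u].

Definition Bset (R : ringType) n p (w : R) (x : 'I_n -> R) : Prop :=
  forall i, exists k : 'I_p, x i = w ^+ k.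

Definition Btset (R : comNzRingType) n p (w : R) (t : nat) (x : 'I_n -> R) : Prop :=
  Bset p w x /\ \prod_(i < n) x i = w ^+ t.

Definition inD n p (u : mono n) : bool := [forall i, (u i <= p.-1)%N].

From HB Require Import structures.
From mathcomp Require Import all_boot all_order all_algebra all_field.
From mathcomp Require Import zify ring.
Set Implicit Arguments. Unset Strict Implicit. Unset Printing Implicit Defensive.
Import Order.TTheory GRing.Theory Num.Theory.

(* Suppose f vanishes on B_t with leading monomial x^u and apply to it the
   functional g |-> sum_(x in B_t) g(x) x^((p-1)u).  Since x^p = 1 on B, this
   sends a monomial x^v to the power sum S(v - u), where
   S(a) = sum_(x in B_t) x^a.  Multiplying x_i by w and x_j by w^-1 permutes
   B_t and scales S(a) by w^(a_i - a_j), so S(a) = 0 unless all a_i are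
   congruent mod p.  When deg u < n(p-1)/p and u is in D, no monomial v <> u of
   degree at most deg u has all v_i - u_i congruent mod p, so only the leading
   term survives and contributes |B_t| times its nonzero coefficient. *)

Definition mscale n (k : nat) (u : mono n) : mono n := [ffun i => k * u i].

Definition residues_const n (p : nat) (a : mono n) : bool :=
  [forall i, forall j, a i == a j %[mod p]].

Lemma mul_subn_leq_shift_mod (p c x : nat) : x < p -> 0 < c < p ->
  c * (p - c) <= c * x + (p - c) * ((x + c) %% p).
Proof.
move=> x_lt_p /andP[c_gt0 c_lt_p].
case: (ltnP (x + c) p) => xc_p; first by rewrite modn_small //; nia.
have -> : (x + c) %% p = x + c - p.
  by rewrite -{1}(subnK xc_p) modnDr modn_small //; lia.
nia.
Qed.

Section ShiftedResidues.
Variables (n p : nat) (u v : mono n).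
Hypothesis u_lt_p : forall i, u i < p.

Lemma eq_of_residues_eq : (forall i, v i = u i %[mod p]) -> mdeg v <= mdeg u -> v = u.
Proof.
move=> v_u deg_vu; apply/esym/ffunP => i.
have u_le_v j : u j <= v j ?= iff (u j == v j).
  by apply: leqif_eq; rewrite -(modn_small (u_lt_p j)) -v_u leq_mod.
have [le_uv] := leqif_sum (fun j (_ : true) => u_le_v j).
rewrite -/(mdeg u) -/(mdeg v) eqn_leq le_uv deg_vu.
by move=> /esym/forallP/(_ i)/eqP.
Qed.

Lemma deg_shifted_residues_ge (c : nat) : 0 < c < p ->
  (forall i, v i = u i + c %[mod p]) ->
  n * (c * (p - c)) <= c * mdeg u + (p - c) * mdeg v.
Proof.
move=> c_range v_uc; rewrite -[n in n * _]card_ord -sum_nat_const.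
rewrite /mdeg !big_distrr -big_split /=; apply: leq_sum => i _.
apply: leq_trans (mul_subn_leq_shift_mod (u_lt_p i) c_range) _.
by rewrite leq_add2l -v_uc leq_mul2l leq_mod orbT.
Qed.

Lemma eq_of_residues_const : mdeg u * p < n * p.-1 -> mdeg v <= mdeg u ->
  residues_const p (mmul v (mscale p.-1 u)) -> v = u.
Proof.
move=> deg_u deg_vu /forallP const.
have n_gt0 : 0 < n by nia.
have p_gt0 : 0 < p by nia.
pose c := (v (Ordinal n_gt0) + p.-1 * u (Ordinal n_gt0)) %% p.
have v_uc i : v i = u i + c %[mod p].
  have /forallP/(_ (Ordinal n_gt0))/eqP := const i; rewrite !ffunE => e.
  rewrite /c -e modnDmr addnCA -{1}(mul1n (u i)) -mulnDl add1n prednK //.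
  by rewrite [p * _]mulnC addnC modnMDl.
have [c0 | c_gt0] := posnP c.
  by apply: eq_of_residues_eq => // i; rewrite v_uc c0 addn0.
have c_lt_p : c < p by rewrite ltn_mod.
(* n (p-1) <= n c (p-c) <= c deg u + (p-c) deg v <= p deg u < n (p-1) *)
have := deg_shifted_residues_ge (introT andP (conj c_gt0 c_lt_p)) v_uc.
have : p.-1 <= c * (p - c) by nia.
nia.
Qed.
End ShiftedResidues.

Local Open Scope ring_scope.

Lemma mmonoevalM (R : comNzRingType) n (u v : mono n) (x : 'I_n -> R) :
  mmonoeval (mmul u v) x = mmonoeval u x * mmonoeval v x.
Proof.
by rewrite /mmonoeval -big_split; apply: eq_bigr => i _; rewrite ffunE exprD.
Qed.

Section RootOfUnityGrid.
Variables (R : idomainType) (n p : nat) (w : R).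
Hypothesis prim_w : p.-primitive_root w.

Definition grid_pt (k : {ffun 'I_n -> 'I_p}) : 'I_n -> R := fun l => w ^+ k l.

Definition on_level (t : nat) (k : {ffun 'I_n -> 'I_p}) : bool :=
  \prod_l grid_pt k l == w ^+ t.

Definition level_power_sum (t : nat) (a : mono n) : R :=
  \sum_(k | on_level t k) mmonoeval a (grid_pt k).

Lemma grid_pt_Btset t k : on_level t k -> Btset p w t (grid_pt k).
Proof. by move/eqP; split=> // l; exists (k l). Qed.

(* Multiplies coordinate i by w and coordinate j by w^-1 = w^(p-1). *)
Definition grid_shift (i j : 'I_n) (k : {ffun 'I_n -> 'I_p}) : {ffun 'I_n -> 'I_p} :=
  [ffun l => if l == i then ordS (k l) else if l == j then ord_pred (k l) else k l].

Lemma grid_shift_inj i j : injective (grid_shift i j).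
Proof.
move=> k1 k2 /ffunP e; apply/ffunP => l; have := e l; rewrite !ffunE.
case: (l == i); first exact: ordS_inj.
by case: (l == j); first exact: ord_pred_inj.
Qed.

Lemma expr_ordS (x : 'I_p) : w ^+ ordS x = w ^+ x * w.
Proof. by rewrite /= (prim_expr_mod prim_w) exprSr. Qed.

Lemma expr_ord_pred (x : 'I_p) : w ^+ ord_pred x = w ^+ x * w ^+ p.-1.
Proof.
have p_gt0 := prim_order_gt0 prim_w.
by rewrite /= (prim_expr_mod prim_w) -exprD; congr (_ ^+ _); lia.
Qed.

Lemma prod_grid_shift (i j : 'I_n) k (a : 'I_n -> nat) : i != j ->
  \prod_l grid_pt (grid_shift i j k) l ^+ a l =
  \prod_l grid_pt k l ^+ a l * w ^+ (a i + p.-1 * a j).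
Proof.
move=> ij; rewrite /grid_pt.
rewrite (bigD1 i) // (bigD1 j) 1?eq_sym //= [in RHS](bigD1 i) // (bigD1 j) 1?eq_sym //=.
rewrite !ffunE eqxx eq_sym (negbTE ij) eqxx expr_ordS expr_ord_pred.
rewrite (eq_bigr (fun l => (w ^+ k l) ^+ a l)); last first.
  by move=> l /andP[li lj]; rewrite ffunE (negbTE li) (negbTE lj).
rewrite exprD exprM !exprMn -!exprM mulnC; ring.
Qed.

Lemma on_level_shift t i j k : i != j -> on_level t (grid_shift i j k) = on_level t k.
Proof.
move=> ij; have := prod_grid_shift k (fun _ => 1%N) ij.
rewrite /on_level !(eq_bigr _ (fun l _ => expr1 _)) => ->.
by rewrite muln1 add1n (prednK (prim_order_gt0 prim_w)) (prim_expr_order prim_w) mulr1.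
Qed.

Lemma level_power_sum_eq0 t (a : mono n) : ~~ residues_const p a -> level_power_sum t a = 0.
Proof.
case/forallPn=> i /forallPn[j a_ij].
have ij : i != j by apply: contraNneq a_ij => ->.
set z := w ^+ (a i + p.-1 * a j).
have z_neq1 : z != 1.
  apply: contra a_ij; rewrite -(expr0 w) (eq_prim_root_expr prim_w) => /eqP z0.
  have p_gt0 := prim_order_gt0 prim_w.
  have -> : a i = a i + p.-1 * a j + a j %[mod p].
    by rewrite -addnA -{2}(mul1n (a j)) -mulnDl addn1 prednK // -modnDmr modnMr addn0.
  by rewrite -modnDml z0 mod0n add0n.
have z_fixed : level_power_sum t a * z = level_power_sum t a.
  rewrite /level_power_sum [RHS](reindex_inj (@grid_shift_inj i j)) big_distrl /=.
  by apply: eq_big => k; [rewrite on_level_shift | rewrite /mmonoeval prod_grid_shift].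
have : level_power_sum t a * (1 - z) = 0 by rewrite mulrBr mulr1 z_fixed subrr.
by move/eqP; rewrite mulf_eq0 subr_eq0 (eq_sym 1 z) (negbTE z_neq1) orbF => /eqP.
Qed.

Lemma level_power_sum_dvd t (a : mono n) : (forall l, (p %| a l)%N) ->
  level_power_sum t a = #|on_level t|%:R.
Proof.
move=> p_dvd_a; rewrite -sumr_const; apply: eq_bigr => k _; apply: big1 => l _.
by rewrite /grid_pt -exprM mulnC exprM -(prim_expr_mod prim_w) (eqP (p_dvd_a l)) expr1n.
Qed.

Lemma level_nonempty t : (0 < n)%N -> (t < p)%N -> (0 < #|on_level t|)%N.
Proof.
move=> n_gt0 t_lt_p; apply/card_gt0P.
pose i0 := Ordinal n_gt0; pose zero := Ordinal (prim_order_gt0 prim_w).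
exists [ffun l => if l == i0 then Ordinal t_lt_p else zero].
rewrite unfold_in /on_level (bigD1 i0) //= big1 ?mulr1 /grid_pt ?ffunE ?eqxx //.
by move=> l /negbTE l_i0; rewrite ffunE l_i0.
Qed.

Lemma level_sum_meval t (f : mpoly R n) (a : mono n) :
  \sum_(k | on_level t k) meval f (grid_pt k) * mmonoeval a (grid_pt k) =
  \sum_(v <- undup (msupp f)) mcoef f v * level_power_sum t (mmul v a).
Proof.
rewrite /meval; under eq_bigr do rewrite big_distrl; rewrite exchange_big /=.
apply: eq_bigr => v _; rewrite /level_power_sum big_distrr; apply: eq_bigr => k _.
by rewrite mmonoevalM /= mulrA.
Qed.

Lemma vanishes_on_level_power_sums t (f : mpoly R n) (a : mono n) :
  vanishes_on f (Btset p w t) ->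
  \sum_(v <- undup (msupp f)) mcoef f v * level_power_sum t (mmul v a) = 0.
Proof.
move=> f_van; rewrite -level_sum_meval.
by apply: big1 => k /grid_pt_Btset /f_van ->; rewrite mul0r.
Qed.

End RootOfUnityGrid.

Lemma lead_mono_deg_max (R : nzRingType) n (le : rel (mono n)) (f : mpoly R n) u v :
  antisymmetric le -> degree_compatible le -> is_lead_mono le f u ->
  mcoef f v != 0 -> (mdeg v <= mdeg u)%N.
Proof.
move=> le_anti le_deg [_ lead_u] fv_neq0; rewrite leqNgt; apply/negP.
by move=> /le_deg/andP[le_uv]; rewrite (le_anti u v) ?eqxx // le_uv lead_u.
Qed.

Theorem mainTheorem9 (C : numClosedFieldType) (n p : nat) (w : C)
  (le : rel (mono n)) :
  (1 <= n)%N -> prime p -> (p %| n)%N ->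
  p.-primitive_root w ->
  term_order le -> degree_compatible le ->
  forall t : nat, (t <= p.-1)%N ->
  forall u : mono n,
    inD p u -> ((mdeg u)%:R < (n * p.-1)%:R / p%:R :> rat) ->
    Sm le (Btset p w t) u.
Proof.
move=> n_gt0 p_prime _ prim_w [_ [_ [le_anti _]]] le_deg t t_le u uD deg_u.
move=> [f [f_van _ lead_u]]; have [fu_neq0 _] := lead_u.
have p_gt0 := prime_gt0 p_prime.
have u_lt_p i : (u i < p)%N by move/forallP: uD => /(_ i); rewrite -ltnS prednK.
have deg_uN : (mdeg u * p < n * p.-1)%N.
  by move: deg_u; rewrite ltr_pdivlMr ?ltr0n // -natrM ltr_nat.
have u_supp : u \in undup (msupp f).
  by move: fu_neq0; rewrite mem_undup /mcoef; case: ifP => //; rewrite eqxx.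
have := vanishes_on_level_power_sums (mscale p.-1 u) f_van.
rewrite (bigD1_seq u) ?undup_uniq //= big1_seq ?addr0; last first.
  move=> v /andP[v_neq_u _]; have [->|fv_neq0] := eqVneq (mcoef f v) 0.
    by rewrite mul0r.
  rewrite level_power_sum_eq0 ?mulr0 //; apply: contra v_neq_u => const.
  have deg_vu := lead_mono_deg_max le_anti le_deg lead_u fv_neq0.
  by rewrite (eq_of_residues_const u_lt_p deg_uN deg_vu const).
move/eqP; rewrite mulf_eq0 (negbTE fu_neq0) level_power_sum_dvd //.
  rewrite pnatr_eq0 /=; apply/negP; rewrite -lt0n level_nonempty //.
  by move: t_le; rewrite -ltnS prednK.
by move=> l; rewrite !ffunE -{1}(mul1n (u l)) -mulnDl add1n prednK // dvdn_mulr.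
Qed.
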